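(* Let $\mathfrak m_+,\mathfrak m_-$ be Lie subalgebras of $\mathfrak g$ with $\mathfrak l_r\subset\mathfrak m_+\oplus\mathfrak m_-$, and $\mathfrak t=\mathfrak m_+\cap\mathfrak m_-$. Then the following are equivalent: (i) $\mathfrak m_+\oplus\mathfrak m_-\subset\mathfrak n_{\mathfrak g\oplus\mathfrak g}(\mathfrak l_r)$ (the normalizer of $\mathfrak l_r$ in $\mathfrak g\oplus\mathfrak g$); (ii) $[\mathfrak m_+,\mathfrak f_+]\subset\mathfrak f_+^\perp$ and $[\mathfrak m_-,\mathfrak f_-]\subset\mathfrak f_-^\perp$; (iii) $\delta_r(x)=0$ for all $x\in\mathfrak t$.
   Context: $\mathfrak g$ is a real or complex Lie algebra and $r=\sum_ix_i\otimes y_i\in\mathfrak g\otimes\mathfrak g$ a factorizable quasitriangular $r$-matrix: $r+r^{21}$ is ad-invariant and nondegenerate and the classical Yang–Baxter equation holds. $\delta_r(x)=\mathrm{ad}_x(r)$. $r_+(\xi)=\sum_i\langle\xi,x_i\rangle y_i$, $r_-(\xi)=-\sum_i\langle\xi,y_i\rangle x_i$ ($\xi\in\mathfrak g^*$); $\langle a,b\rangle_{\mathfrak g}=\langle(r_+-r_-)^{-1}a,b\rangle$, $\perp$ orthogonality; $r^\flat_\pm=r_\pm\circ(r_+-r_-)^{-1}$; $\mathfrak f_\pm=\mathrm{Im}\,r_\pm$; $\mathfrak l_r=\{(r^\flat_+(x),r^\flat_-(x)):x\in\mathfrak g\}\subset\mathfrak g\oplus\mathfrak g$ (direct product Lie algebra).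 *)

(* A finite-dimensional Lie algebra g over a characteristic-0
   field K (numFieldType; covers R and C) is modelled as 'rV[K]_n with a bracket
   [br].  Tensors in g (x) g are coefficient matrices: T = sum_ij T i j e_i (x) e_j,
   and a (x) b  <->  a^T *m b.  The dual g^* is identified with 'rV[K]_n via
   the pairing <xi, x> = xi *m x^T. *)
From HB Require Import structures.
From mathcomp Require Import all_boot all_order all_algebra.
Set Implicit Arguments. Unset Strict Implicit. Unset Printing Implicit Defensive.
Import Order.TTheory GRing.Theory Num.Theory.
Local Open Scope ring_scope.

Section LieDefs.
Variables (K : numFieldType) (n : nat).
Implicit Types (br : 'rV[K]_n -> 'rV[K]_n -> 'rV[K]_n) (R T : 'M[K]_n)
  (x y a b xi : 'rV[K]_n).

Definition ev (i : 'I_n) : 'rV[K]_n := delta_mx 0 i.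

Definition is_lie_bracket br : Prop :=
  [/\ (forall (c : K) x y z, br (c *: x + y) z = c *: br x z + br y z),
      (forall (c : K) x y z, br x (c *: y + z) = c *: br x y + br x z),
      (forall x, br x x = 0) &
      (forall x y z, br x (br y z) + br y (br z x) + br z (br x y) = 0)].

Definition is_lie_subalgebra br (M : 'M[K]_n) : Prop :=
  forall x y, (x <= M)%MS -> (y <= M)%MS -> (br x y <= M)%MS.

Definition tens a b : 'M[K]_n := a^T *m b.

Definition ad2 br x T : 'M[K]_n :=
  \sum_(i < n) \sum_(j < n)
     T i j *: (tens (br x (ev i)) (ev j) + tens (ev i) (br x (ev j))).

Definition delta_r br R x : 'M[K]_n := ad2 br x R.

Definition tens3 a b (c : 'rV[K]_n) (t : 'I_n * 'I_n * 'I_n) : K :=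
  a 0 t.1.1 * b 0 t.1.2 * c 0 t.2.

(* coefficients of [r12,r13] + [r12,r23] + [r13,r23] in g (x) g (x) g *)
Definition CYB br R : {ffun 'I_n * 'I_n * 'I_n -> K} :=
  [ffun t => \sum_(i < n) \sum_(j < n) \sum_(k < n) \sum_(l < n)
    (R i j * R k l) *
      (tens3 (br (ev i) (ev k)) (ev j) (ev l) t
     + tens3 (ev i) (br (ev j) (ev k)) (ev l) t
     + tens3 (ev i) (ev k) (br (ev j) (ev l)) t)].

Definition factorizable br R : Prop :=
  [/\ (forall x, ad2 br x (R + R^T) = 0),
      R + R^T \in unitmx &
      (forall t, CYB br R t = 0)].

(* r_+(xi) = sum_i <xi,x_i> y_i,  r_-(xi) = - sum_i <xi,y_i> x_i *)
Definition r_plus R xi : 'rV[K]_n := xi *m R.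
Definition r_minus R xi : 'rV[K]_n := - (xi *m R^T).

(* (r_+ - r_-)^{-1}; note (r_+ - r_-)(xi) = xi *m (R + R^T) *)
Definition rpm_inv R a : 'rV[K]_n := a *m invmx (R + R^T).

Definition gform R a b : K := (rpm_inv R a *m b^T) 0 0.

Definition rflat_plus R x : 'rV[K]_n := r_plus R (rpm_inv R x).
Definition rflat_minus R x : 'rV[K]_n := r_minus R (rpm_inv R x).

Definition in_f_plus R y : Prop := exists xi, y = r_plus R xi.
Definition in_f_minus R y : Prop := exists xi, y = r_minus R xi.

Definition in_perp R (S : 'rV[K]_n -> Prop) a : Prop :=
  forall b, S b -> gform R a b = 0.

Definition in_lr R (p : 'rV[K]_n * 'rV[K]_n) : Prop :=
  exists x, p = (rflat_plus R x, rflat_minus R x).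

Definition in_normalizer_lr br R (p : 'rV[K]_n * 'rV[K]_n) : Prop :=
  forall x, in_lr R (br p.1 (rflat_plus R x), br p.2 (rflat_minus R x)).

End LieDefs.

From HB Require Import structures.
From mathcomp Require Import all_boot all_order all_algebra.
From mathcomp Require Import ring.
Import GRing.Theory.
Local Open Scope ring_scope.

(* Since r♭₊ - r♭₋ = id, l_r is the graph {(u, v) | r♭₊ (u - v) = u}, and
   f_±^⊥ = ker r♭_∓ for the form <,>_g.  Hence (a, 0) normalizes l_r iff
   [a, f_+] ⊥ f_+, (0, b) normalizes l_r iff [b, f_-] ⊥ f_-, and l_r is a linear
   subspace: this is (i) <-> (ii).  Ad-invariance of r + r^21 makes δ_r(x) = 0
   equivalent to ad_x commuting with r♭₊, i.e. to (x, x) normalizing l_r, which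
   gives (i) -> (iii).  Conversely the classical Yang-Baxter equation makes l_r a
   subalgebra, and since l_r ⊂ m_+ ⊕ m_-, every (a, b) ∈ m_+ ⊕ m_- splits as
   (r♭₊ w, r♭₋ w) + (t, t) with w = a - b and t ∈ m_+ ∩ m_-. *)

Set Implicit Arguments. Unset Strict Implicit.

Lemma oppr_eq0P (V : zmodType) (x : V) : - x = 0 <-> x = 0.
Proof. by split=> [/eqP|->]; rewrite ?oppr0 // oppr_eq0 => /eqP. Qed.

Section Pairing.
Variables (K : numFieldType) (n : nat).
Implicit Types (a b c u v w z : 'rV[K]_n) (M : 'M[K]_n).

Definition dot u v : K := (u *m v^T) 0 0.

Lemma dotC u v : dot u v = dot v u.
Proof. by rewrite /dot -[u *m v^T]trmxK trmx_mul trmxK mxE. Qed.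

Lemma dot_mulmx u v M : dot (u *m M) v = dot u (v *m M^T).
Proof. by rewrite /dot trmx_mul trmxK mulmxA. Qed.

Lemma dot_mulmxr u v M : dot u (v *m M) = dot (u *m M^T) v.
Proof. by rewrite dot_mulmx trmxK. Qed.

Lemma dotNl u v : dot (- u) v = - dot u v.
Proof. by rewrite /dot mulNmx mxE. Qed.

Lemma dotDl u v w : dot (u + v) w = dot u w + dot v w.
Proof. by rewrite /dot mulmxDl mxE. Qed.

Lemma dotDr u v w : dot u (v + w) = dot u v + dot u w.
Proof. by rewrite /dot linearD mulmxDr mxE. Qed.

Lemma dot0l v : dot 0 v = 0.
Proof. by rewrite /dot mul0mx mxE. Qed.

Lemma dot_ev i v : dot (ev K i) v = v 0 i.
Proof. by rewrite /dot /ev -rowE -tr_col !mxE. Qed.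

Lemma row_dot_eq0 w : (forall v, dot w v = 0) -> w = 0.
Proof. by move=> w0; apply/rowP => j; rewrite mxE -(w0 (ev K j)) dotC dot_ev. Qed.

Lemma contract_tens3 a b c (z1 z2 z3 : 'rV[K]_n) :
  \sum_t (z1 0 t.1.1 * z2 0 t.1.2 * z3 0 t.2) * tens3 a b c t =
  dot a z1 * dot b z2 * dot c z3.
Proof.
rewrite /dot !mxE big_distrlr pair_big big_distrlr pair_big /=.
by apply: eq_big => // t _; rewrite /tens3 !mxE; ring.
Qed.

End Pairing.

Section LieBracket.
Variables (K : numFieldType) (n : nat) (br : 'rV[K]_n -> 'rV[K]_n -> 'rV[K]_n).
Hypothesis brP : is_lie_bracket br.
Implicit Types (u v x y z : 'rV[K]_n) (M N R T : 'M[K]_n).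

Definition admx x : 'M[K]_n := \matrix_i br x (ev K i).

Lemma brDl x y z : br (x + y) z = br x z + br y z.
Proof. by have [brl _ _ _] := brP; rewrite -[x]scale1r brl !scale1r. Qed.

Lemma brDr x y z : br x (y + z) = br x y + br x z.
Proof. by have [_ brr _ _] := brP; rewrite -[y]scale1r brr !scale1r. Qed.

Lemma br0r x : br x 0 = 0.
Proof. by apply: (@addrI _ (br x 0)); rewrite -brDr !addr0. Qed.

Lemma br_mulmx x u : br x u = u *m admx x.
Proof.
have [_ brr _ _] := brP.
rewrite mulmx_sum_row {1}(row_sum_delta u).
apply: (big_rec2 (fun a b => br x a = b)) => [|i a b _ <-]; first exact: br0r.
by rewrite brr rowK.
Qed.

Lemma brC x y : br x y = - br y x.
Proof.
have [_ _ brxx _] := brP; apply/eqP; rewrite -addr_eq0.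
by have := brxx (x + y); rewrite brDl !brDr !brxx add0r addr0 => ->.
Qed.

Lemma br0l y : br 0 y = 0.
Proof. by rewrite brC br0r oppr0. Qed.

Lemma brNr x y : br x (- y) = - br x y.
Proof. by rewrite !br_mulmx mulNmx. Qed.

Lemma brNl x y : br (- x) y = - br x y.
Proof. by rewrite brC brNr opprK brC. Qed.

Lemma br_coord u v :
  br u v = \sum_i \sum_k (u 0 i * v 0 k) *: br (ev K i) (ev K k).
Proof.
rewrite brC br_mulmx mulmx_sum_row -sumrN; apply: eq_bigr => i _.
rewrite rowK -scalerN -brC br_mulmx mulmx_sum_row scaler_sumr.
by apply: eq_bigr => k _; rewrite rowK scalerA.
Qed.

Lemma dot_br_coord u v z :
  dot (br u v) z = \sum_i \sum_k u 0 i * v 0 k * dot (br (ev K i) (ev K k)) z.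
Proof.
rewrite br_coord /dot mulmx_suml summxE; apply: eq_bigr => i _.
by rewrite mulmx_suml summxE; apply: eq_bigr => k _; rewrite -scalemxAl mxE.
Qed.

Lemma ad2E x T : ad2 br x T = (admx x)^T *m T + T *m admx x.
Proof.
have evTev i j : (ev K i)^T *m ev K j = delta_mx i j.
  by rewrite /ev trmx_delta mul_delta_mx.
rewrite /ad2 [in RHS](matrix_sum_delta T) mulmx_sumr mulmx_suml -big_split.
apply: eq_bigr => i _; rewrite mulmx_sumr mulmx_suml -big_split.
apply: eq_bigr => j _; rewrite -scalemxAr -scalemxAl scalerDr.
by rewrite /tens !br_mulmx trmx_mul -mulmxA evTev mulmxA evTev.
Qed.

Lemma dot_br_mulmx u v M N z :
  dot (br (u *m M) (v *m N)) z = \sum_i \sum_j \sum_k \sum_l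
    u 0 j * M j i * (v 0 l * N l k) * dot (br (ev K i) (ev K k)) z.
Proof.
rewrite dot_br_coord; apply: eq_bigr => i _; rewrite exchange_big.
apply: eq_bigr => k _; rewrite !mxE big_distrl big_distrl /=.
by apply: eq_big => // j _; rewrite big_distrr big_distrl.
Qed.

Lemma contract_CYB R (z1 z2 z3 : 'rV[K]_n) :
  \sum_t (z1 0 t.1.1 * z2 0 t.1.2 * z3 0 t.2) * CYB br R t =
  dot (br (z2 *m R^T) (z3 *m R^T)) z1 + dot (br (z1 *m R) (z3 *m R^T)) z2
  + dot (br (z1 *m R) (z2 *m R)) z3.
Proof.
set w := (fun t : 'I_n * 'I_n * 'I_n => z1 0 t.1.1 * z2 0 t.1.2 * z3 0 t.2).
pose D z i k := dot (br (ev K i) (ev K k)) z.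
have sum_inside (F : 'I_n -> 'I_n * 'I_n * 'I_n -> K) :
    \sum_t w t * (\sum_i F i t) = \sum_i \sum_t w t * F i t.
  by rewrite exchange_big; apply: eq_bigr => t _; rewrite mulr_sumr.
transitivity (\sum_i \sum_j \sum_k \sum_l R i j * R k l *
  (D z1 i k * z2 0 j * z3 0 l + z1 0 i * D z2 j k * z3 0 l
   + z1 0 i * z2 0 k * D z3 j l)).
  under eq_bigr => t _ do rewrite ffunE.
  rewrite sum_inside; apply: eq_bigr => i _; rewrite sum_inside.
  apply: eq_bigr => j _; rewrite sum_inside; apply: eq_bigr => k _.
  rewrite sum_inside; apply: eq_bigr => l _.
  under eq_bigr => t _ do rewrite mulrCA.
  rewrite -mulr_sumr; congr (_ * _).
  under eq_bigr => t _ do rewrite !mulrDr.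
  by rewrite !big_split /= !contract_tens3 !dot_ev.
rewrite !dot_br_mulmx [X in _ + X + _]exchange_big [X in _ + X]exchange_big.
under [X in _ + X]eq_bigr => i _ do under eq_bigr => j _ do rewrite exchange_big.
rewrite -!big_split; apply: eq_big => // i _; rewrite -!big_split.
apply: eq_big => // j _; rewrite -!big_split; apply: eq_big => // k _.
by rewrite -!big_split; apply: eq_big => // l _; rewrite !mxE /D /=; ring.
Qed.

End LieBracket.

Section RMatrix.
Variables (K : numFieldType) (n : nat) (R : 'M[K]_n).
Hypothesis unitS : R + R^T \in unitmx.
Implicit Types (u v w x a b : 'rV[K]_n).

Local Notation B := (invmx (R + R^T)).

Lemma trmxS : (R + R^T)^T = R + R^T.
Proof. by rewrite linearD /= trmxK addrC. Qed.

Lemma trmx_invS : B^T = B.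
Proof. by rewrite trmx_inv trmxS. Qed.

Lemma gformE a b : gform R a b = dot (a *m B) b.
Proof. by []. Qed.

Lemma gformC a b : gform R a b = gform R b a.
Proof. by rewrite !gformE dot_mulmx trmx_invS dotC. Qed.

Lemma rflat_plusE u : rflat_plus R u = u *m (B *m R).
Proof. by rewrite mulmxA. Qed.

Lemma rflat_minusE u : rflat_minus R u = - (u *m (B *m R^T)).
Proof. by rewrite mulmxA. Qed.

Lemma rflat_plus_minus u : rflat_plus R u - rflat_minus R u = u.
Proof.
by rewrite rflat_plusE rflat_minusE opprK -mulmxDr -(mulmxDr B) mulVmx ?mulmx1.
Qed.

Lemma rflat_plus_mulS u : rflat_plus R (u *m (R + R^T)) = u *m R.
Proof. by rewrite rflat_plusE mulmxA -(mulmxA u) mulmxV ?mulmx1. Qed.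

Lemma rflat_minus_mulS u : rflat_minus R (u *m (R + R^T)) = r_minus R u.
Proof. by rewrite rflat_minusE mulmxA -(mulmxA u) mulmxV ?mulmx1. Qed.

Lemma in_lrP u v : in_lr R (u, v) <-> rflat_plus R (u - v) = u.
Proof.
split=> [[x [-> ->]]|uvP]; first by rewrite rflat_plus_minus.
exists (u - v); congr (_, _) => //.
by have := rflat_plus_minus (u - v); rewrite uvP => /addrI/oppr_inj.
Qed.

Lemma in_lrD u1 v1 u2 v2 :
  in_lr R (u1, v1) -> in_lr R (u2, v2) -> in_lr R (u1 + u2, v1 + v2).
Proof.
move=> [x1 [-> ->]] [x2 [-> ->]]; exists (x1 + x2).
by rewrite !rflat_plusE !rflat_minusE !mulmxDl opprD.
Qed.

Lemma in_lr_l u : in_lr R (u, 0) <-> rflat_minus R u = 0.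
Proof.
have pm := rflat_plus_minus u; rewrite in_lrP subr0.
split=> [pu|mu]; last by rewrite -[RHS]pm mu subr0.
by apply/oppr_inj/(addrI u); rewrite oppr0 addr0 -{1}pu.
Qed.

Lemma in_lr_r v : in_lr R (0, v) <-> rflat_plus R v = 0.
Proof.
by rewrite in_lrP sub0r rflat_plusE mulNmx -rflat_plusE oppr_eq0P.
Qed.

Lemma perp_f_plusP u : in_perp R (in_f_plus R) u <-> rflat_minus R u = 0.
Proof.
rewrite rflat_minusE oppr_eq0P mulmxA.
split=> [perp_u|u0 _ [xi ->]]; last by rewrite gformE dot_mulmxr u0 dot0l.
apply: row_dot_eq0 => xi; rewrite dot_mulmx trmxK; apply: perp_u.
by exists xi.
Qed.

Lemma perp_f_minusP u : in_perp R (in_f_minus R) u <-> rflat_plus R u = 0.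
Proof.
rewrite rflat_plusE mulmxA.
split=> [perp_u|u0 _ [xi ->]].
  apply: row_dot_eq0 => xi; rewrite dot_mulmx; apply: perp_u.
  by exists (- xi); rewrite /r_minus mulNmx opprK.
by rewrite gformE /r_minus -mulNmx dot_mulmxr trmxK u0 dot0l.
Qed.

Lemma gformNl a b : gform R (- a) b = - gform R a b.
Proof. by rewrite !gformE mulNmx dotNl. Qed.

Lemma dot_gform v z : dot v z = gform R v (z *m R) + gform R v (z *m R^T).
Proof.
by rewrite !gformE -dotDr -mulmxDr dot_mulmxr trmxS -mulmxA mulVmx ?mulmx1.
Qed.

Section Invariance.
Variable br : 'rV[K]_n -> 'rV[K]_n -> 'rV[K]_n.
Hypothesis brP : is_lie_bracket br.
Hypothesis adS : forall x, ad2 br x (R + R^T) = 0.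

Lemma invS_admx x : B *m (admx br x)^T = - (admx br x *m B).
Proof.
have skew : (admx br x)^T *m (R + R^T) = - ((R + R^T) *m admx br x).
  by apply/eqP; rewrite -addr_eq0 -(ad2E brP) adS.
rewrite -[LHS]mulmx1 -(mulmxV unitS) !mulmxA -(mulmxA B) skew.
by rewrite mulmxN mulNmx mulmxA mulVmx ?mul1mx.
Qed.

Lemma gform_br a x b : gform R a (br x b) = - gform R (br x a) b.
Proof.
rewrite !gformE !(br_mulmx brP) dot_mulmxr -mulmxA invS_admx.
by rewrite mulmxN mulmxA dotNl.
Qed.

Lemma gform_br_cycle a b c : gform R (br a b) c = gform R (br b c) a.
Proof. by rewrite [RHS]gformC gform_br (brC brP b a) gformNl opprK. Qed.

Lemma delta_r_eq0P x :
  delta_r br R x = 0 <-> forall u, br x (rflat_plus R u) = rflat_plus R (br x u).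
Proof.
(* With A := admx br x, [invS_admx] gives B R A - A B R = B (A^T R + R A). *)
have commE : B *m R *m admx br x - admx br x *m (B *m R) = B *m delta_r br R x.
  rewrite /delta_r (ad2E brP) mulmxA -[admx br x *m B]opprK -invS_admx mulNmx opprK.
  by rewrite mulmxDr addrC !mulmxA.
split=> [dx u|comm].
  rewrite !rflat_plusE !(br_mulmx brP) -!mulmxA; congr (u *m _).
  by apply/eqP; rewrite -subr_eq0 mulmxA commE dx mulmx0.
have Bd0 : B *m delta_r br R x = 0.
  rewrite -commE; apply/eqP; rewrite subr_eq0; apply/mulmxP => u.
  by rewrite mulmxA -rflat_plusE -(br_mulmx brP) comm rflat_plusE (br_mulmx brP) -mulmxA.
by rewrite -(mulKVmx unitS (delta_r br R x)) Bd0 mulmx0.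
Qed.

Hypothesis cybR : forall t, CYB br R t = 0.

(* The four terms of the contracted CYBE mixing [R] and [R^T] cancel in pairs,
   since [gform R (br a b) c] is totally antisymmetric in [a], [b], [c]. *)
Lemma cyb_gform p q w :
  gform R (br (p *m R) (q *m R)) (w *m R)
  + gform R (br (p *m R^T) (q *m R^T)) (w *m R^T) = 0.
Proof.
have := contract_CYB brP R p q w.
rewrite big1 => [|t _]; last by rewrite cybR mulr0.
rewrite !dot_gform.
set a1 := p *m R; set a2 := q *m R; set a3 := w *m R.
set b1 := p *m R^T; set b2 := q *m R^T; set b3 := w *m R^T.
rewrite (gform_br_cycle a1 b3 b2) (brC brP b3 b2) gformNl.
rewrite (gform_br_cycle a1 b3 a2) (gform_br_cycle b3 a2 a1) (brC brP a2 a1) gformNl.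
rewrite (gform_br_cycle b1 b2 b3) => /esym E; rewrite -[RHS]E; ring.
Qed.

Lemma in_lr_br w x :
  in_lr R (br (rflat_plus R w) (rflat_plus R x),
           br (rflat_minus R w) (rflat_minus R x)).
Proof.
set c := br (rflat_plus R w) _; set d := br (rflat_minus R w) _.
have cd : rflat_minus R c = rflat_plus R d.
  apply/eqP; rewrite rflat_minusE eq_sym -subr_eq0 opprK rflat_plusE.
  apply/eqP/row_dot_eq0 => eta; rewrite dotDl !mulmxA dot_mulmx [X in _ + X]dot_mulmx !trmxK.
  rewrite /c /d !rflat_plusE !rflat_minusE (brNl brP) (brNr brP) opprK !mulmxA.
  by rewrite addrC; apply: cyb_gform.
apply/in_lrP; rewrite rflat_plusE mulmxBl -!rflat_plusE -cd.
exact: rflat_plus_minus.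
Qed.

End Invariance.

End RMatrix.

Section Normalizer.
Variables (K : numFieldType) (n : nat) (br : 'rV[K]_n -> 'rV[K]_n -> 'rV[K]_n).
Variable R : 'M[K]_n.
Hypothesis brP : is_lie_bracket br.
Hypothesis unitS : R + R^T \in unitmx.
Implicit Types (a b u w x y : 'rV[K]_n).

Lemma in_normalizer_lrD a1 b1 a2 b2 :
  in_normalizer_lr br R (a1, b1) -> in_normalizer_lr br R (a2, b2) ->
  in_normalizer_lr br R (a1 + a2, b1 + b2).
Proof. by move=> N1 N2 x; rewrite /= !(brDl brP); apply: in_lrD. Qed.

Lemma in_normalizer_lr_diagP (t : 'rV[K]_n) :
  in_normalizer_lr br R (t, t) <->
  forall u, br t (rflat_plus R u) = rflat_plus R (br t u).
Proof.
have brt u : br t (rflat_plus R u) - br t (rflat_minus R u) = br t u.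
  by rewrite !(br_mulmx brP) -mulmxBl (rflat_plus_minus unitS).
split=> [N u|comm x]; last by apply/(in_lrP unitS); rewrite brt comm.
by have /(in_lrP unitS) := N u; rewrite brt => ->.
Qed.

Variables Mp Mm : 'M[K]_n.

Lemma normalizer_perp :
  (forall a b, (a <= Mp)%MS -> (b <= Mm)%MS -> in_normalizer_lr br R (a, b)) ->
  (forall x y, (x <= Mp)%MS -> in_f_plus R y -> in_perp R (in_f_plus R) (br x y)) /\
  (forall x y, (x <= Mm)%MS -> in_f_minus R y -> in_perp R (in_f_minus R) (br x y)).
Proof.
move=> N; split=> x _ Hx [xi ->].
  apply/perp_f_plusP/(in_lr_l unitS).
  have := N x 0 Hx (sub0mx _ _) (xi *m (R + R^T)).
  by rewrite /= (rflat_plus_mulS unitS) (br0l brP).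
apply/perp_f_minusP/(in_lr_r unitS).
have := N 0 x (sub0mx _ _) Hx (xi *m (R + R^T)).
by rewrite /= (rflat_minus_mulS unitS) (br0l brP).
Qed.

Lemma perp_normalizer :
  (forall x y, (x <= Mp)%MS -> in_f_plus R y -> in_perp R (in_f_plus R) (br x y)) /\
  (forall x y, (x <= Mm)%MS -> in_f_minus R y -> in_perp R (in_f_minus R) (br x y)) ->
  (forall a b, (a <= Mp)%MS -> (b <= Mm)%MS -> in_normalizer_lr br R (a, b)).
Proof.
move=> [perp_p perp_m] a b Ha Hb x /=.
rewrite -[br a _]addr0 -[br b _]add0r; apply: in_lrD.
  apply/(in_lr_l unitS)/perp_f_plusP/perp_p => //.
  by exists (rpm_inv R x).
apply/(in_lr_r unitS)/perp_f_minusP/perp_m => //.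
by exists (rpm_inv R x).
Qed.

Hypothesis adS : forall x, ad2 br x (R + R^T) = 0.

Lemma normalizer_delta :
  (forall a b, (a <= Mp)%MS -> (b <= Mm)%MS -> in_normalizer_lr br R (a, b)) ->
  (forall x, (x <= Mp :&: Mm)%MS -> delta_r br R x = 0).
Proof.
move=> N x; rewrite sub_capmx => /andP [xp xm].
by apply/(delta_r_eq0P unitS brP adS)/in_normalizer_lr_diagP; apply: N.
Qed.

Hypothesis cybR : forall t, CYB br R t = 0.
Hypothesis lr_sub : forall x, (rflat_plus R x <= Mp)%MS /\ (rflat_minus R x <= Mm)%MS.

Lemma delta_normalizer :
  (forall x, (x <= Mp :&: Mm)%MS -> delta_r br R x = 0) ->
  (forall a b, (a <= Mp)%MS -> (b <= Mm)%MS -> in_normalizer_lr br R (a, b)).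
Proof.
move=> D a b Ha Hb; set w := a - b; set t := a - rflat_plus R w.
have plusE : rflat_plus R w = w + rflat_minus R w.
  by rewrite -{2}(rflat_plus_minus unitS w) subrK.
have aE : a = rflat_plus R w + t by rewrite /t addrC subrK.
have bE : b = rflat_minus R w + t.
  have -> : t = a - w - rflat_minus R w by rewrite /t plusE opprD addrA.
  by rewrite addrC subrK /w opprB addrC subrK.
have Ht : (t <= Mp :&: Mm)%MS.
  rewrite sub_capmx; apply/andP; split.
    by rewrite /t addmx_sub // eqmx_opp; exact: (lr_sub w).1.
  have -> : t = b - rflat_minus R w by rewrite bE addrC addKr.
  by rewrite addmx_sub // eqmx_opp; exact: (lr_sub w).2.
rewrite aE bE; apply: in_normalizer_lrD => [x|].
  exact: (in_lr_br unitS brP adS cybR).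
apply/in_normalizer_lr_diagP/(delta_r_eq0P unitS brP adS).
exact: D.
Qed.

End Normalizer.

Theorem lemma4p11 (K : numFieldType) (n : nat)
  (br : 'rV[K]_n -> 'rV[K]_n -> 'rV[K]_n) (R Mp Mm : 'M[K]_n) :
  is_lie_bracket br ->
  factorizable br R ->
  is_lie_subalgebra br Mp ->
  is_lie_subalgebra br Mm ->
  (forall x, (rflat_plus R x <= Mp)%MS /\ (rflat_minus R x <= Mm)%MS) ->
  [<-> (forall a b, (a <= Mp)%MS -> (b <= Mm)%MS -> in_normalizer_lr br R (a, b));
       (forall x y, (x <= Mp)%MS -> in_f_plus R y ->
                    in_perp R (in_f_plus R) (br x y)) /\
       (forall x y, (x <= Mm)%MS -> in_f_minus R y ->
                    in_perp R (in_f_minus R) (br x y));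
       (forall x, (x <= Mp :&: Mm)%MS -> delta_r br R x = 0)].
Proof.
move=> brP [adS unitS cybR] _ _ lr_sub.
tfae.
- exact: normalizer_perp.
- by move/(perp_normalizer unitS); apply: normalizer_delta.
- exact: delta_normalizer.
Qed.
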